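(* Let $x\ge1$ be an integer and $u,v\in\mathbf{C}$ with $\Re u>1$ and $\Re v>1$. Then \[ J_x(u,v)=\frac{x^{1-u-v}}{u+v-1}+\int_x^\infty\alpha^{-u}\zeta_1(v,\alpha)\,d\alpha+\int_x^\infty\alpha^{-v}\zeta_1(u,\alpha)\,d\alpha, \] with both integrals absolutely convergent.
   Context: For an integer $x\geq 0$, $\alpha>0$ and $\Re s>1$, $\zeta_x(s,\alpha)=\sum_{n\geq x}(n+\alpha)^{-s}$. $J_x(u,v)=\int_0^1\zeta_x(u,\alpha)\zeta_x(v,\alpha)\,d\alpha$. *)

From Stdlib Require Import Reals ClassicalEpsilon.
Open Scope R_scope.

Record Cplx := mkC { Re : R; Im : R }.
Definition Czero : Cplx := mkC 0 0.
Definition Cone : Cplx := mkC 1 0.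
Definition Cadd (z w : Cplx) : Cplx := mkC (Re z + Re w) (Im z + Im w).
Definition Copp (z : Cplx) : Cplx := mkC (- Re z) (- Im z).
Definition Csub (z w : Cplx) : Cplx := Cadd z (Copp w).
Definition Cmul (z w : Cplx) : Cplx :=
  mkC (Re z * Re w - Im z * Im w) (Re z * Im w + Im z * Re w).
Definition Cnorm (z : Cplx) : R := sqrt (Re z ^ 2 + Im z ^ 2).
Definition Cinv (z : Cplx) : Cplx :=
  mkC (Re z / (Re z ^ 2 + Im z ^ 2)) (- Im z / (Re z ^ 2 + Im z ^ 2)).
Definition Cdiv (z w : Cplx) : Cplx := Cmul z (Cinv w).

(** Principal power a^s = exp(s ln a) of a positive real a, s complex. *)
Definition cpow (a : R) (s : Cplx) : Cplx :=
  mkC (exp (Re s * ln a) * cos (Im s * ln a))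
      (exp (Re s * ln a) * sin (Im s * ln a)).

Definition Cseq_cv (u : nat -> Cplx) (l : Cplx) : Prop :=
  Un_cv (fun n => Re (u n)) (Re l) /\ Un_cv (fun n => Im (u n)) (Im l).

(** The limit of a complex sequence (meaningful when it converges). *)
Definition Clim (u : nat -> Cplx) : Cplx := epsilon (inhabits Czero) (Cseq_cv u).

Fixpoint Csum (f : nat -> Cplx) (N : nat) : Cplx :=
  match N with
  | O => Czero
  | S k => Cadd (Csum f k) (f k)
  end.

(** Hurwitz zeta tail: zeta_x(s, alpha) = sum_{n >= x} (n + alpha)^(-s). *)
Definition zeta_tail (x : nat) (s : Cplx) (alpha : R) : Cplx :=
  Clim (fun N => Csum (fun k => cpow (INR (x + k) + alpha) (Copp s)) N).

Definition is_RInt (f : R -> R) (a b I : R) : Prop :=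
  exists pr : Riemann_integrable f a b, RiemannInt pr = I.

Definition is_RInt_C (f : R -> Cplx) (a b : R) (I : Cplx) : Prop :=
  is_RInt (fun t => Re (f t)) a b (Re I) /\ is_RInt (fun t => Im (f t)) a b (Im I).

Definition is_improper_RInt (f : R -> R) (a I : R) : Prop :=
  (forall T, a <= T -> exists J, is_RInt f a T J) /\
  (forall eps, 0 < eps -> exists M, forall T J,
      M <= T -> a <= T -> is_RInt f a T J -> Rabs (J - I) < eps).

Definition is_improper_RInt_C (f : R -> Cplx) (a : R) (I : Cplx) : Prop :=
  (forall T, a <= T -> exists J, is_RInt_C f a T J) /\
  (forall eps, 0 < eps -> exists M, forall T J,
      M <= T -> a <= T -> is_RInt_C f a T J -> Cnorm (Csub J I) < eps).

Definition improper_abs_conv (f : R -> Cplx) (a : R) : Prop :=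
  exists L, is_improper_RInt (fun t => Cnorm (f t)) a L.

(** The integral of a complex function on [a,b] (meaningful when it exists). *)
Definition RInt_C (f : R -> Cplx) (a b : R) : Cplx :=
  epsilon (inhabits Czero) (is_RInt_C f a b).

Definition J (x : nat) (u v : Cplx) : Cplx :=
  RInt_C (fun alpha => Cmul (zeta_tail x u alpha) (zeta_tail x v alpha)) 0 1.

From Pilot Require Import Defs.
From Stdlib Require Import Reals Lra Lia Psatz ClassicalEpsilon FunctionalExtensionality.
From Coquelicot Require Import Rcomplements Rbar Hierarchy Continuity Derive AutoDerive RInt RInt_analysis ElemFct.
Open Scope R_scope.

(* Write A_s(t) = sum_{n >= 0} (n + t)^(-s) (here [hurwitz s t]), so that zeta_x(s, a) = A_s(x + a)
   and J_x(u, v) is the integral of H := A_u A_v over [x, x + 1].  The recursion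
   A_s(t) = t^(-s) + A_s(t + 1) gives
     H(t) - H(t + 1) = t^(-u-v) + t^(-u) zeta_1(v, t) + t^(-v) zeta_1(u, t),
   and integrating over [x, T]:
     int_x^(x+1) H - int_T^(T+1) H = [- t^(1-u-v) / (u+v-1)]_x^T + int_x^T (the two cross terms).
   Comparing A_s with the integral of t^(-Re s) bounds |A_s(t)| by O(t^(-Re s) + t^(1 - Re s)),
   so the cross terms are O(t^(-Re u)) and O(t^(-Re v)), hence absolutely integrable,
   while the terms depending on T tend to 0 as T -> +oo. *)

Lemma Cplx_ext (z w : Cplx) : Re z = Re w -> Im z = Im w -> z = w.
Proof. destruct z, w; simpl; intros; subst; reflexivity. Qed.

Lemma Cnorm_ge0 z : 0 <= Cnorm z.
Proof. apply sqrt_pos. Qed.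

Lemma Re_le_Cnorm z : Rabs (Re z) <= Cnorm z.
Proof. unfold Cnorm. rewrite <- sqrt_Rsqr_abs. apply sqrt_le_1_alt. unfold Rsqr. nra. Qed.

Lemma Im_le_Cnorm z : Rabs (Im z) <= Cnorm z.
Proof. unfold Cnorm. rewrite <- sqrt_Rsqr_abs. apply sqrt_le_1_alt. unfold Rsqr. nra. Qed.

Lemma Cnorm_le_Re_Im z : Cnorm z <= Rabs (Re z) + Rabs (Im z).
Proof.
  pose proof (Rabs_pos (Re z)); pose proof (Rabs_pos (Im z)).
  unfold Cnorm. rewrite <- (sqrt_Rsqr (Rabs (Re z) + Rabs (Im z))) by lra.
  apply sqrt_le_1_alt. unfold Rsqr.
  assert (Rabs (Re z) * Rabs (Re z) = Re z * Re z) by (rewrite <- Rabs_mult; apply Rabs_pos_eq; nra).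
  assert (Rabs (Im z) * Rabs (Im z) = Im z * Im z) by (rewrite <- Rabs_mult; apply Rabs_pos_eq; nra).
  nra.
Qed.

Lemma Cnorm_mul z w : Cnorm (Cmul z w) = Cnorm z * Cnorm w.
Proof. unfold Cnorm, Cmul; simpl. rewrite <- sqrt_mult by nra. f_equal. ring. Qed.

Lemma Cnorm_cpow a s : Cnorm (cpow a s) = Rpower a (Re s).
Proof.
  unfold Cnorm, cpow, Rpower; cbn [Re Im].
  set (e := exp _); set (th := Im s * ln a).
  replace ((e * cos th) ^ 2 + (e * sin th) ^ 2) with (e ^ 2 * (sin th ^ 2 + cos th ^ 2)) by ring.
  rewrite <- !Rsqr_pow2, sin2_cos2, Rmult_1_r, Rsqr_pow2.
  apply sqrt_pow2. left; apply exp_pos.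
Qed.

Lemma cpow_add a s w : cpow a (Cadd s w) = Cmul (cpow a s) (cpow a w).
Proof.
  apply Cplx_ext; unfold cpow, Cmul, Cadd; cbn [Re Im];
    rewrite !Rmult_plus_distr_r, exp_plus; [rewrite cos_plus | rewrite sin_plus]; ring.
Qed.

(* Complex limits and integrals are defined coordinatewise, so many statements below are made for
   an arbitrary coordinate [pr]. *)
Definition Ccoord (pr : Cplx -> R) : Prop := pr = Re \/ pr = Im.

Lemma Ccoord_le_Cnorm pr z : Ccoord pr -> Rabs (pr z) <= Cnorm z.
Proof. intros [-> | ->]; [apply Re_le_Cnorm | apply Im_le_Cnorm]. Qed.

Lemma Ccoord_Cadd pr z w : Ccoord pr -> pr (Cadd z w) = pr z + pr w.
Proof. intros [-> | ->]; reflexivity. Qed.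

Lemma Ccoord_Czero pr : Ccoord pr -> pr Czero = 0.
Proof. intros [-> | ->]; reflexivity. Qed.

Lemma Clim_eq u l : Cseq_cv u l -> Clim u = l.
Proof.
  intros [Hre Him]. unfold Clim.
  destruct (epsilon_spec (inhabits Czero) (Cseq_cv u) (ex_intro _ l (conj Hre Him))) as [Hre' Him'].
  apply Cplx_ext; eapply UL_sequence; eassumption.
Qed.

Lemma Ccoord_ext z w : (forall pr, Ccoord pr -> pr z = pr w) -> z = w.
Proof. intros H. apply Cplx_ext; apply H; [left | right]; reflexivity. Qed.

Lemma Ccoord_Un_cv pr u l : Ccoord pr -> Cseq_cv u l -> Un_cv (fun n => pr (u n)) (pr l).
Proof. intros [-> | ->] [Hre Him]; assumption. Qed.

Lemma Rpower_le_base p s t : p <= 0 -> 0 < s -> s <= t -> Rpower t p <= Rpower s p.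
Proof.
  intros Hp Hs Hst. unfold Rpower.
  pose proof (ln_le s t Hs Hst).
  destruct (Req_dec (p * ln t) (p * ln s)) as [-> | Hne]; [lra |].
  left. apply exp_increasing. nra.
Qed.

Lemma Rpower_gt0 t p : 0 < Rpower t p.
Proof. apply exp_pos. Qed.

Lemma is_derive_Rpower t p : 0 < t -> is_derive (fun y => Rpower y p) t (p * Rpower t (p - 1)).
Proof. intros Ht. apply is_derive_Reals, derivable_pt_lim_power, Ht. Qed.

Lemma continuity_pt_Rpower t p : 0 < t -> continuity_pt (fun y => Rpower y p) t.
Proof. intros Ht. apply derivable_continuous_pt. eexists. apply derivable_pt_lim_power, Ht. Qed.

Lemma is_lim_Rpower_neg p : p < 0 -> is_lim (fun t => Rpower t p) p_infty 0.
Proof.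
  intros Hp. unfold Rpower.
  apply (is_lim_comp exp (fun t => p * ln t) p_infty 0 m_infty).
  - exact is_lim_exp_m.
  - replace m_infty with (Rbar_mult p p_infty).
    + apply is_lim_scal_l, is_lim_ln_p.
    + simpl. destruct (Rle_dec 0 p); [exfalso; lra | reflexivity].
  - exists 0. intros t _. discriminate.
Qed.

Lemma Un_cv_is_lim_p_infty f (l : R) t : is_lim f p_infty l -> Un_cv (fun n => f (INR n + t)) l.
Proof.
  intros Hf eps Heps. apply is_lim_spec in Hf.
  destruct (Hf (mkposreal eps Heps)) as [M HM].
  destruct (INR_unbounded (M - t)) as [N HN]. exists N. intros n Hn.
  apply HM. apply le_INR in Hn. lra.
Qed.

(* The integral of [t^(-sg)] over [y, +oo). *)
Definition rpow_tail (sg y : R) : R := Rpower y (1 - sg) / (sg - 1).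

Section PowerTail.
Variable sg : R.
Hypothesis Hsg : 1 < sg.

Lemma rpow_tail_gt0 y : 0 < rpow_tail sg y.
Proof. apply Rdiv_lt_0_compat; [apply Rpower_gt0 | lra]. Qed.

Lemma rpow_tail_le y z : 0 < y -> y <= z -> rpow_tail sg z <= rpow_tail sg y.
Proof.
  intros Hy Hyz. apply Rmult_le_compat_r.
  - left; apply Rinv_0_lt_compat; lra.
  - apply Rpower_le_base; lra.
Qed.

Lemma is_derive_rpow_tail y : 0 < y -> is_derive (rpow_tail sg) y (- Rpower y (- sg)).
Proof.
  intros Hy.
  apply (is_derive_ext (fun y => / (sg - 1) * Rpower y (1 - sg))).
  { intros z. unfold rpow_tail, Rdiv. apply Rmult_comm. }
  replace (- Rpower y (- sg)) with (/ (sg - 1) * ((1 - sg) * Rpower y (1 - sg - 1))).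
  - apply is_derive_scal, is_derive_Rpower, Hy.
  - replace (1 - sg - 1) with (- sg) by ring. field. lra.
Qed.

Lemma is_lim_rpow_tail : is_lim (rpow_tail sg) p_infty 0.
Proof.
  replace (Finite 0) with (Rbar_mult 0 (/ (sg - 1))) by (simpl; f_equal; ring).
  apply is_lim_scal_r, is_lim_Rpower_neg. lra.
Qed.

Lemma RInt_Rpower_neg a b : 0 < a -> 0 < b ->
  RInt (fun t => Rpower t (- sg)) a b = rpow_tail sg a - rpow_tail sg b.
Proof.
  intros Ha Hb. apply is_RInt_unique.
  assert (Hab : 0 < Rmin a b) by (apply Rmin_glb_lt; auto).
  replace (rpow_tail sg a - rpow_tail sg b)
    with (minus (opp (rpow_tail sg b)) (opp (rpow_tail sg a)))
    by (unfold minus, plus, opp; simpl; ring).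
  apply (is_RInt_derive (fun t => opp (rpow_tail sg t))).
  - intros t Ht. rewrite <- (Ropp_involutive (Rpower t (- sg))).
    exact (is_derive_opp _ _ _ (is_derive_rpow_tail t ltac:(lra))).
  - intros t Ht. apply continuity_pt_filterlim, continuity_pt_Rpower. lra.
Qed.

Lemma Rpower_le_rpow_tail_sub y : 0 < y -> Rpower (y + 1) (- sg) <= rpow_tail sg y - rpow_tail sg (y + 1).
Proof.
  intros Hy. rewrite <- RInt_Rpower_neg by lra.
  apply Rle_trans with (RInt (fun _ => Rpower (y + 1) (- sg)) y (y + 1)).
  { right. rewrite RInt_const. unfold scal; simpl; unfold mult; simpl. ring. }
  apply RInt_le; try lra.
  - apply ex_RInt_const.
  - apply (ex_RInt_continuous (V := R_CompleteNormedModule)). intros t Ht.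
    apply continuity_pt_filterlim, continuity_pt_Rpower.
    rewrite Rmin_left in Ht by lra. lra.
  - intros t Ht. apply Rpower_le_base; lra.
Qed.

(* It drops by at least [y^(-sg)] from [y] to [y + 1], so it bounds the tails of [sum_n (n + y)^(-sg)]. *)
Definition zeta_majorant (y : R) : R := Rpower y (- sg) + rpow_tail sg y.

Lemma zeta_majorant_gt0 y : 0 < zeta_majorant y.
Proof. pose proof (Rpower_gt0 y (- sg)); pose proof (rpow_tail_gt0 y). unfold zeta_majorant; lra. Qed.

Lemma zeta_majorant_le y z : 0 < y -> y <= z -> zeta_majorant z <= zeta_majorant y.
Proof.
  intros Hy Hyz. pose proof (Rpower_le_base (- sg) y z ltac:(lra) Hy Hyz).
  pose proof (rpow_tail_le y z Hy Hyz). unfold zeta_majorant; lra.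
Qed.

Lemma Rpower_le_zeta_majorant_sub y : 0 < y -> Rpower y (- sg) <= zeta_majorant y - zeta_majorant (y + 1).
Proof. intros Hy. pose proof (Rpower_le_rpow_tail_sub y Hy). unfold zeta_majorant; lra. Qed.

Lemma is_lim_zeta_majorant : is_lim zeta_majorant p_infty 0.
Proof.
  rewrite <- (Rplus_0_l 0).
  apply is_lim_plus'; [apply is_lim_Rpower_neg; lra | apply is_lim_rpow_tail].
Qed.

End PowerTail.

(** * Series with a telescoping majorant *)

Section TelescopingMajorant.
Variables a c : nat -> R.
Hypothesis step_le : forall n, Rabs (a (S n) - a n) <= c n - c (S n).
Hypothesis c_cv : Un_cv c 0.

Lemma Rabs_sub_le_majorant_sub n m : (n <= m)%nat -> Rabs (a m - a n) <= c n - c m.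
Proof.
  induction 1 as [| m _ IH].
  - rewrite Rminus_diag, Rabs_R0. lra.
  - replace (a (S m) - a n) with ((a (S m) - a m) + (a m - a n)) by ring.
    eapply Rle_trans; [apply Rabs_triang |]. pose proof (step_le m). lra.
Qed.

Lemma majorant_le n m : (n <= m)%nat -> c m <= c n.
Proof. intros Hnm. pose proof (Rabs_sub_le_majorant_sub n m Hnm). pose proof (Rabs_pos (a m - a n)). lra. Qed.

Lemma majorant_ge0 n : 0 <= c n.
Proof.
  apply Rnot_lt_le. intros Hneg.
  destruct (c_cv (- c n) ltac:(lra)) as [N HN].
  specialize (HN (Nat.max N n) (Nat.le_max_l N n)). unfold Rdist in HN.
  pose proof (majorant_le n (Nat.max N n) (Nat.le_max_r N n)).
  rewrite Rminus_0_r, Rabs_left in HN; lra.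
Qed.

Lemma Rabs_sub_le_majorant n m : (n <= m)%nat -> Rabs (a m - a n) <= c n.
Proof. intros Hnm. pose proof (Rabs_sub_le_majorant_sub n m Hnm). pose proof (majorant_ge0 m). lra. Qed.

Lemma cv_of_telescoping_majorant : {l | Un_cv a l}.
Proof.
  apply Rcomplete.R_complete. intros eps Heps.
  destruct (c_cv eps Heps) as [N HN]. exists N. intros n m Hn Hm. unfold Rdist.
  assert (Hc : forall k, (N <= k)%nat -> c k < eps).
  { intros k Hk. specialize (HN k Hk). unfold Rdist in HN. rewrite Rminus_0_r in HN.
    pose proof (Rle_abs (c k)). lra. }
  destruct (Nat.le_ge_cases n m) as [Hnm | Hmn].
  - rewrite Rabs_minus_sym. eapply Rle_lt_trans; [apply Rabs_sub_le_majorant, Hnm | auto].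
  - eapply Rle_lt_trans; [apply Rabs_sub_le_majorant, Hmn | auto].
Qed.

Lemma Rabs_lim_sub_le_majorant l n : Un_cv a l -> Rabs (l - a n) <= c n.
Proof.
  intros Hl.
  apply (@Rle_cv_lim (fun m => Rabs (a (m + n)%nat - a n)) (fun _ => c n)).
  - intros m. apply Rabs_sub_le_majorant. lia.
  - apply (continuity_seq (fun y => Rabs (y - a n))).
    + apply (continuity_pt_comp (fun y => y - a n) Rabs).
      * apply continuity_pt_minus; [apply derivable_continuous_pt, derivable_pt_id |].
        apply continuity_pt_const. intros ? ?; reflexivity.
      * apply Rcontinuity_abs.
    + apply CV_shift', Hl.
  - intros eps Heps. exists O. intros. rewrite Rdist_eq. exact Heps.
Qed.

End TelescopingMajorant.

Definition continuous_pos (f : R -> R) : Prop := forall t, 0 < t -> continuity_pt f t.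

Definition Ccontinuous_pos (F : R -> Cplx) : Prop :=
  forall pr, Ccoord pr -> continuous_pos (fun t => pr (F t)).

Lemma continuous_pos_Rpower p : continuous_pos (fun t => Rpower t p).
Proof. intros t Ht. apply continuity_pt_Rpower, Ht. Qed.

Lemma Ccontinuous_pos_cpow s : Ccontinuous_pos (fun t => cpow t s).
Proof.
  intros pr [-> | ->] t Ht; apply derivable_continuous_pt; eexists; apply is_derive_Reals;
    unfold cpow; cbn [Re Im]; auto_derive; auto.
Qed.

Lemma Ccontinuous_pos_const z : Ccontinuous_pos (fun _ => z).
Proof. intros pr _ t _. apply continuity_pt_const. intros ? ?; reflexivity. Qed.

Lemma Ccontinuous_pos_add F G : Ccontinuous_pos F -> Ccontinuous_pos G ->
  Ccontinuous_pos (fun t => Cadd (F t) (G t)).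
Proof.
  intros HF HG pr Hpr t Ht. destruct Hpr as [-> | ->]; unfold Cadd; cbn [Re Im];
    apply continuity_pt_plus; [apply HF | apply HG | apply HF | apply HG]; auto; (left + right); reflexivity.
Qed.

Lemma Ccontinuous_pos_mul F G : Ccontinuous_pos F -> Ccontinuous_pos G ->
  Ccontinuous_pos (fun t => Cmul (F t) (G t)).
Proof.
  intros HF HG pr Hpr t Ht.
  assert (HFr := HF Re (or_introl eq_refl) t Ht); assert (HFi := HF Im (or_intror eq_refl) t Ht).
  assert (HGr := HG Re (or_introl eq_refl) t Ht); assert (HGi := HG Im (or_intror eq_refl) t Ht).
  destruct Hpr as [-> | ->]; unfold Cmul; cbn [Re Im].
  - apply continuity_pt_minus; apply continuity_pt_mult; assumption.
  - apply continuity_pt_plus; apply continuity_pt_mult; assumption.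
Qed.

Lemma continuity_pt_shift f c t : continuity_pt f (c + t) -> continuity_pt (fun y => f (c + y)) t.
Proof.
  intros Hf. apply (continuity_pt_comp (fun y => c + y) f); [| exact Hf].
  apply continuity_pt_plus; [apply continuity_pt_const; intros ? ?; reflexivity |
    apply derivable_continuous_pt, derivable_pt_id].
Qed.

Lemma continuous_pos_shift f c : 0 <= c -> continuous_pos f -> continuous_pos (fun t => f (c + t)).
Proof. intros Hc Hf t Ht. apply continuity_pt_shift, Hf. lra. Qed.

Lemma Ccontinuous_pos_shift F c : 0 <= c -> Ccontinuous_pos F -> Ccontinuous_pos (fun t => F (c + t)).
Proof. intros Hc HF pr Hpr. apply (continuous_pos_shift (fun t => pr (F t))), HF; assumption. Qed.

Lemma continuous_pos_Cnorm F : Ccontinuous_pos F -> continuous_pos (fun t => Cnorm (F t)).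
Proof.
  intros HF t Ht. unfold Cnorm.
  assert (HFr := HF Re (or_introl eq_refl) t Ht); assert (HFi := HF Im (or_intror eq_refl) t Ht).
  apply (continuity_pt_comp (fun t => Re (F t) ^ 2 + Im (F t) ^ 2) sqrt).
  - apply continuity_pt_plus; simpl;
      repeat apply continuity_pt_mult; try assumption; apply continuity_pt_const; intros ? ?; reflexivity.
  - apply continuity_pt_sqrt. unfold comp. nra.
Qed.

(** * The Hurwitz zeta function *)

Definition hurwitz_psum (s : Cplx) (t : R) (N : nat) : Cplx :=
  Csum (fun k => cpow (INR k + t) (Copp s)) N.

Definition hurwitz (s : Cplx) (t : R) : Cplx := Clim (hurwitz_psum s t).

Lemma zeta_tail_eq_hurwitz x s t : zeta_tail x s t = hurwitz s (INR x + t).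
Proof.
  unfold zeta_tail, hurwitz, hurwitz_psum. f_equal.
  apply functional_extensionality; intros N. f_equal.
  apply functional_extensionality; intros k. rewrite plus_INR. f_equal. ring.
Qed.

Lemma Ccoord_hurwitz_psum_S pr s t n : Ccoord pr ->
  pr (hurwitz_psum s t (S n)) = pr (hurwitz_psum s t n) + pr (cpow (INR n + t) (Copp s)).
Proof. intros Hpr. apply Ccoord_Cadd, Hpr. Qed.

Lemma hurwitz_psum_S_shift s t n :
  hurwitz_psum s t (S n) = Cadd (cpow t (Copp s)) (hurwitz_psum s (t + 1) n).
Proof.
  apply Ccoord_ext. intros pr Hpr. rewrite Ccoord_Cadd by exact Hpr.
  induction n as [| n IH].
  - rewrite Ccoord_hurwitz_psum_S by exact Hpr. unfold hurwitz_psum; cbn [Csum].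
    rewrite Ccoord_Czero by exact Hpr. replace (INR 0 + t) with t by (simpl; ring). ring.
  - rewrite Ccoord_hurwitz_psum_S, IH, (Ccoord_hurwitz_psum_S pr s (t + 1)) by exact Hpr.
    rewrite S_INR. replace (INR n + 1 + t) with (INR n + (t + 1)) by ring. ring.
Qed.

Section Hurwitz.
Variable s : Cplx.
Hypothesis Hs : 1 < Re s.

Lemma hurwitz_psum_step_le pr t n : Ccoord pr -> 0 < t ->
  Rabs (pr (hurwitz_psum s t (S n)) - pr (hurwitz_psum s t n))
    <= zeta_majorant (Re s) (INR n + t) - zeta_majorant (Re s) (INR (S n) + t).
Proof.
  intros Hpr Ht. rewrite Ccoord_hurwitz_psum_S by exact Hpr.
  replace (_ + _ - _) with (pr (cpow (INR n + t) (Copp s))) by ring.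
  eapply Rle_trans; [apply Ccoord_le_Cnorm, Hpr |].
  rewrite Cnorm_cpow, S_INR. replace (INR n + 1 + t) with (INR n + t + 1) by ring.
  apply Rpower_le_zeta_majorant_sub; [lra |]. pose proof (pos_INR n). lra.
Qed.

Lemma hurwitz_psum_Ccoord_cv pr t : Ccoord pr -> 0 < t -> {l | Un_cv (fun n => pr (hurwitz_psum s t n)) l}.
Proof.
  intros Hpr Ht. apply (cv_of_telescoping_majorant _ (fun n => zeta_majorant (Re s) (INR n + t))).
  - intros n. apply hurwitz_psum_step_le; assumption.
  - apply Un_cv_is_lim_p_infty, is_lim_zeta_majorant. lra.
Qed.

Lemma hurwitz_psum_cv t : 0 < t -> Cseq_cv (hurwitz_psum s t) (hurwitz s t).
Proof.
  intros Ht.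
  destruct (hurwitz_psum_Ccoord_cv Re t (or_introl eq_refl) Ht) as [lr Hr].
  destruct (hurwitz_psum_Ccoord_cv Im t (or_intror eq_refl) Ht) as [li Hi].
  assert (Hcv : Cseq_cv (hurwitz_psum s t) (mkC lr li)) by (split; assumption).
  unfold hurwitz. rewrite (Clim_eq _ _ Hcv). exact Hcv.
Qed.

Lemma Ccoord_hurwitz_sub_psum_le pr t n : Ccoord pr -> 0 < t ->
  Rabs (pr (hurwitz s t) - pr (hurwitz_psum s t n)) <= zeta_majorant (Re s) (INR n + t).
Proof.
  intros Hpr Ht.
  apply (Rabs_lim_sub_le_majorant (fun n => pr (hurwitz_psum s t n)) (fun n => zeta_majorant (Re s) (INR n + t))).
  - intros m. apply hurwitz_psum_step_le; assumption.
  - apply Un_cv_is_lim_p_infty, is_lim_zeta_majorant. lra.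
  - apply Ccoord_Un_cv, hurwitz_psum_cv; assumption.
Qed.

Lemma Cnorm_hurwitz_le t : 0 < t -> Cnorm (hurwitz s t) <= 2 * zeta_majorant (Re s) t.
Proof.
  intros Ht.
  assert (Hcoord : forall pr, Ccoord pr -> Rabs (pr (hurwitz s t)) <= zeta_majorant (Re s) t).
  { intros pr Hpr. pose proof (Ccoord_hurwitz_sub_psum_le pr t 0 Hpr Ht) as H.
    unfold hurwitz_psum in H; cbn [Csum] in H. rewrite Ccoord_Czero, Rminus_0_r in H by exact Hpr.
    simpl in H. rewrite Rplus_0_l in H. exact H. }
  eapply Rle_trans; [apply Cnorm_le_Re_Im |].
  pose proof (Hcoord Re (or_introl eq_refl)); pose proof (Hcoord Im (or_intror eq_refl)). lra.
Qed.

Lemma hurwitz_rec t : 0 < t -> hurwitz s t = Cadd (cpow t (Copp s)) (hurwitz s (t + 1)).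
Proof.
  intros Ht. apply Ccoord_ext. intros pr Hpr.
  apply (UL_sequence (fun n => pr (hurwitz_psum s t (S n)))).
  - intros eps Heps. destruct (Ccoord_Un_cv pr _ _ Hpr (hurwitz_psum_cv t Ht) eps Heps) as [N HN].
    exists N. intros n Hn. apply HN. lia.
  - rewrite Ccoord_Cadd by exact Hpr.
    apply (Un_cv_ext (fun n => pr (cpow t (Copp s)) + pr (hurwitz_psum s (t + 1) n))).
    + intros n. rewrite hurwitz_psum_S_shift, Ccoord_Cadd by exact Hpr. reflexivity.
    + apply CV_plus; [intros eps Heps; exists O; intros; rewrite Rdist_eq; exact Heps |].
      apply Ccoord_Un_cv, hurwitz_psum_cv; [exact Hpr | lra].
Qed.

Lemma Ccontinuous_pos_hurwitz_psum n : Ccontinuous_pos (fun t => hurwitz_psum s t n).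
Proof.
  induction n as [| n IH].
  - apply (Ccontinuous_pos_const Czero).
  - apply Ccontinuous_pos_add; [exact IH |].
    apply (Ccontinuous_pos_shift (fun t => cpow t (Copp s))); [apply pos_INR | apply Ccontinuous_pos_cpow].
Qed.

(* Uniform convergence of the partial sums on [y/2, +oo) transfers continuity. *)
Lemma Ccontinuous_pos_hurwitz : Ccontinuous_pos (hurwitz s).
Proof.
  intros pr Hpr y Hy.
  assert (Hr : 0 < y / 2) by lra.
  apply (CVU_continuity (fun n z => pr (hurwitz_psum s z n)) _ y (mkposreal _ Hr)).
  - intros eps Heps.
    destruct (Un_cv_is_lim_p_infty _ _ (y / 2) (is_lim_zeta_majorant (Re s) Hs) eps Heps) as [N HN].
    exists N. intros n z Hn Hz. unfold Boule in Hz; simpl in Hz. apply Rabs_def2 in Hz.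
    specialize (HN n Hn). unfold Rdist in HN. rewrite Rminus_0_r in HN.
    eapply Rle_lt_trans; [apply Ccoord_hurwitz_sub_psum_le; [exact Hpr | lra] |].
    eapply Rle_lt_trans; [| eapply Rle_lt_trans; [apply Rle_abs | exact HN]].
    pose proof (pos_INR n). apply zeta_majorant_le; lra.
  - intros n z Hz. unfold Boule in Hz; simpl in Hz. apply Rabs_def2 in Hz.
    apply Ccontinuous_pos_hurwitz_psum; [exact Hpr | lra].
  - unfold Boule; simpl. rewrite Rminus_diag, Rabs_R0. exact Hr.
Qed.

End Hurwitz.

Lemma ex_RInt_continuous_pos f a b : continuous_pos f -> 0 < a -> 0 < b -> ex_RInt f a b.
Proof.
  intros Hf Ha Hb. apply (ex_RInt_continuous (V := R_CompleteNormedModule)). intros t Ht.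
  apply continuity_pt_filterlim, Hf.
  assert (0 < Rmin a b) by (apply Rmin_glb_lt; assumption). lra.
Qed.

Lemma RInt_shift (f : R -> R) c a b : ex_RInt f (c + a) (c + b) ->
  RInt (fun t => f (c + t)) a b = RInt f (c + a) (c + b).
Proof.
  intros Hf. rewrite <- (Rmult_1_l a), <- (Rmult_1_l b), !(Rplus_comm c).
  rewrite !(Rplus_comm c) in Hf. rewrite <- (Rmult_1_l a), <- (Rmult_1_l b) in Hf.
  rewrite <- (RInt_comp_lin f 1 c a b Hf). rewrite !Rmult_1_l.
  apply RInt_ext. intros t _. unfold scal; simpl; unfold mult; simpl. rewrite Rmult_1_l. f_equal. ring.
Qed.

Lemma RInt_sub_shift1 (f : R -> R) a b : continuous_pos f -> 0 < a -> 0 < b ->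
  RInt (fun t => f t - f (1 + t)) a b = RInt f a (1 + a) - RInt f b (1 + b).
Proof.
  intros Hf Ha Hb.
  assert (Hex : forall x y, 0 < x -> 0 < y -> ex_RInt f x y) by (intros; apply ex_RInt_continuous_pos; assumption).
  rewrite (RInt_minus (V := R_CompleteNormedModule) f (fun t => f (1 + t)));
    [| apply Hex; assumption |
       apply ex_RInt_continuous_pos; [apply continuous_pos_shift; [lra | exact Hf] | lra | lra]].
  rewrite RInt_shift by (apply Hex; lra).
  assert (C1 := RInt_Chasles f a b (1 + b) (Hex a b Ha Hb) (Hex b (1 + b) Hb ltac:(lra))).
  assert (C2 := RInt_Chasles f a (1 + a) (1 + b) (Hex a (1 + a) Ha ltac:(lra))
                  (Hex (1 + a) (1 + b) ltac:(lra) ltac:(lra))).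
  unfold minus, plus, opp in *; simpl in *. lra.
Qed.

Lemma is_lim_RInt_unit_interval f g : continuous_pos f ->
  (forall T t, 1 <= T -> T <= t <= T + 1 -> Rabs (f t) <= g T) -> is_lim g p_infty 0 ->
  is_lim (fun T => RInt f T (T + 1)) p_infty 0.
Proof.
  intros Hf Hfg Hg.
  apply (is_lim_le_le_loc (fun T => - g T) g).
  - exists 1. intros T HT.
    assert (H : Rabs (RInt f T (T + 1)) <= (T + 1 - T) * g T).
    { apply abs_RInt_le_const; [lra | apply ex_RInt_continuous_pos; try assumption; lra |].
      intros t Ht. apply Hfg; lra. }
    replace (T + 1 - T) with 1 in H by ring. apply Rabs_le_between. lra.
  - replace (Finite 0) with (Rbar_opp 0) by (simpl; f_equal; ring). apply is_lim_opp, Hg.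
  - exact Hg.
Qed.

Lemma Defs_is_RInt_RInt f a b : ex_RInt f a b -> Defs.is_RInt f a b (RInt f a b).
Proof. intros Hf. exists (ex_RInt_Reals_0 _ _ _ Hf). symmetry. apply RInt_Reals. Qed.

Lemma Defs_is_RInt_eq_RInt f a b I : Defs.is_RInt f a b I -> I = RInt f a b.
Proof. intros [pr Hpr]. rewrite <- Hpr. symmetry. apply RInt_Reals. Qed.

Definition RInt_Cplx (F : R -> Cplx) (a b : R) : Cplx :=
  mkC (RInt (fun t => Re (F t)) a b) (RInt (fun t => Im (F t)) a b).

Lemma Ccoord_RInt_Cplx pr F a b : Ccoord pr -> pr (RInt_Cplx F a b) = RInt (fun t => pr (F t)) a b.
Proof. intros [-> | ->]; reflexivity. Qed.

Lemma is_RInt_C_RInt_Cplx F a b : (forall pr, Ccoord pr -> ex_RInt (fun t => pr (F t)) a b) ->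
  is_RInt_C F a b (RInt_Cplx F a b).
Proof. intros HF. split; apply Defs_is_RInt_RInt, HF; [left | right]; reflexivity. Qed.

Lemma RInt_C_eq F a b I : is_RInt_C F a b I -> RInt_C F a b = I.
Proof.
  intros HI. unfold RInt_C.
  destruct (epsilon_spec (inhabits Czero) (is_RInt_C F a b) (ex_intro _ I HI)) as [Hre Him].
  destruct HI as [Hre' Him'].
  apply Cplx_ext.
  - rewrite (Defs_is_RInt_eq_RInt _ _ _ _ Hre), (Defs_is_RInt_eq_RInt _ _ _ _ Hre'). reflexivity.
  - rewrite (Defs_is_RInt_eq_RInt _ _ _ _ Him), (Defs_is_RInt_eq_RInt _ _ _ _ Him'). reflexivity.
Qed.

Lemma is_lim_p_infty_spec f (l : R) eps : is_lim f p_infty l -> 0 < eps ->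
  exists M, forall T, M <= T -> Rabs (f T - l) < eps.
Proof.
  intros Hf Heps. apply is_lim_spec in Hf. destruct (Hf (mkposreal eps Heps)) as [M HM].
  exists (M + 1). intros T HT. apply HM. lra.
Qed.

Lemma is_improper_RInt_of_is_lim f a (I : R) : (forall T, a <= T -> ex_RInt f a T) ->
  is_lim (fun T => RInt f a T) p_infty I -> is_improper_RInt f a I.
Proof.
  intros Hf HI. split.
  - intros T HT. exists (RInt f a T). apply Defs_is_RInt_RInt, Hf, HT.
  - intros eps Heps. destruct (is_lim_p_infty_spec _ _ eps HI Heps) as [M HM].
    exists M. intros T J HMT HT HJ. rewrite (Defs_is_RInt_eq_RInt _ _ _ _ HJ). apply HM, HMT.
Qed.

Lemma is_improper_RInt_C_of_is_lim F a I :
  (forall pr, Ccoord pr -> (forall T, a <= T -> ex_RInt (fun t => pr (F t)) a T) /\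
     is_lim (fun T => RInt (fun t => pr (F t)) a T) p_infty (pr I)) ->
  is_improper_RInt_C F a I.
Proof.
  intros HF.
  destruct (HF Re (or_introl eq_refl)) as [Hre Lre]; destruct (HF Im (or_intror eq_refl)) as [Him Lim].
  split.
  - intros T HT. exists (RInt_Cplx F a T).
    apply is_RInt_C_RInt_Cplx. intros pr [-> | ->]; auto.
  - intros eps Heps.
    destruct (is_lim_p_infty_spec _ _ (eps / 2) Lre ltac:(lra)) as [M1 H1].
    destruct (is_lim_p_infty_spec _ _ (eps / 2) Lim ltac:(lra)) as [M2 H2].
    exists (Rmax M1 M2). intros T J HM HT [HJre HJim].
    apply Defs_is_RInt_eq_RInt in HJre; apply Defs_is_RInt_eq_RInt in HJim.
    eapply Rle_lt_trans; [apply Cnorm_le_Re_Im |]. unfold Csub, Cadd, Copp; cbn [Re Im].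
    rewrite HJre, HJim.
    specialize (H1 T (Rle_trans _ _ _ (Rmax_l _ _) HM)); specialize (H2 T (Rle_trans _ _ _ (Rmax_r _ _) HM)).
    unfold Rminus in H1, H2. lra.
Qed.

Lemma Rabs_RInt_le_rpow_tail f C p u v : 1 < p -> 0 < u -> u <= v -> continuous_pos f ->
  (forall t, u <= t <= v -> Rabs (f t) <= C * Rpower t (- p)) ->
  Rabs (RInt f u v) <= C * (rpow_tail p u - rpow_tail p v).
Proof.
  intros Hp Hu Huv Hf Hb.
  assert (Hpow : ex_RInt (fun t => Rpower t (- p)) u v) by (apply ex_RInt_continuous_pos;
    [apply continuous_pos_Rpower | lra | lra]).
  rewrite <- RInt_Rpower_neg by lra.
  change (C * RInt (fun t => Rpower t (- p)) u v) with (scal C (RInt (fun t => Rpower t (- p)) u v)).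
  rewrite <- (RInt_scal (V := R_CompleteNormedModule) _ u v C Hpow).
  apply (norm_RInt_le f (fun t => scal C (Rpower t (- p))) u v); [exact Huv | exact Hb | |];
    apply (RInt_correct (V := R_CompleteNormedModule));
    [apply ex_RInt_continuous_pos; [exact Hf | lra | lra] | apply (ex_RInt_scal (V := R_NormedModule)), Hpow].
Qed.

(* Cauchy criterion: the integral over [x, y] is at most [C * rpow_tail p x]. *)
Lemma is_lim_RInt_of_Rpower_bound f a C p : 0 < a -> 1 < p -> continuous_pos f ->
  (forall t, a <= t -> Rabs (f t) <= C * Rpower t (- p)) ->
  exists I : R, is_lim (fun T => RInt f a T) p_infty I.
Proof.
  intros Ha Hp Hf Hb.
  assert (HC : 0 <= C).
  { pose proof (Rabs_pos (f a)); pose proof (Hb a (Rle_refl a)); pose proof (Rpower_gt0 a (- p)). nra. }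
  assert (Hdiff : forall x y, a <= x <= y -> Rabs (RInt f a y - RInt f a x) <= C * rpow_tail p x).
  { intros x y Hxy.
    assert (Hch : plus (RInt f a x) (RInt f x y) = RInt f a y)
      by (apply RInt_Chasles; apply ex_RInt_continuous_pos; (exact Hf || lra)).
    unfold plus in Hch; simpl in Hch.
    replace (RInt f a y - RInt f a x) with (RInt f x y) by lra.
    eapply Rle_trans; [apply (Rabs_RInt_le_rpow_tail f C p); try lra; auto; intros t Ht; apply Hb; lra |].
    pose proof (rpow_tail_gt0 p Hp y). nra. }
  assert (Htail : is_lim (fun T => C * rpow_tail p T) p_infty 0).
  { rewrite <- (Rmult_0_r C). apply (is_lim_scal_l _ C p_infty 0), is_lim_rpow_tail, Hp. }
  destruct (proj1 (filterlim_locally_cauchy (F := Rbar_locally' p_infty) (fun T => RInt f a T))) as [I HI].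
  - intros eps. destruct (is_lim_p_infty_spec _ _ eps Htail (cond_pos eps)) as [M HM].
    exists (fun T => Rmax a M < T). split; [exists (Rmax a M); auto |].
    intros x y Hx Hy. apply Rmax_Rlt in Hx; apply Rmax_Rlt in Hy.
    assert (Hsmall : forall z, M <= z -> C * rpow_tail p z < eps).
    { intros z Hz. specialize (HM z Hz). rewrite Rminus_0_r in HM. eapply Rle_lt_trans; [apply Rle_abs | exact HM]. }
    change (Rabs (RInt f a y - RInt f a x) < eps).
    destruct (Rle_lt_dec x y).
    + eapply Rle_lt_trans; [apply Hdiff; lra | apply Hsmall; lra].
    + rewrite Rabs_minus_sym. eapply Rle_lt_trans; [apply Hdiff; lra | apply Hsmall; lra].
  - exists I. exact HI.
Qed.

Definition cross_term (s w : Cplx) (t : R) : Cplx := Cmul (cpow t (Copp s)) (zeta_tail 1 w t).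

Lemma cross_term_eq s w t : cross_term s w t = Cmul (cpow t (Copp s)) (hurwitz w (1 + t)).
Proof. unfold cross_term. rewrite zeta_tail_eq_hurwitz. reflexivity. Qed.

Section CrossTerm.
Variables s w : Cplx.
Hypothesis Hs : 1 < Re s.
Hypothesis Hw : 1 < Re w.

Lemma Ccontinuous_pos_cross_term : Ccontinuous_pos (cross_term s w).
Proof.
  replace (cross_term s w) with (fun t => Cmul (cpow t (Copp s)) (hurwitz w (1 + t)))
    by (apply functional_extensionality; intros t; symmetry; apply cross_term_eq).
  apply Ccontinuous_pos_mul; [apply Ccontinuous_pos_cpow |].
  apply Ccontinuous_pos_shift; [lra | apply Ccontinuous_pos_hurwitz, Hw].
Qed.

Lemma Cnorm_cross_term_le t : 0 < t -> Cnorm (cross_term s w t) <= 2 * zeta_majorant (Re w) 1 * Rpower t (- Re s).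
Proof.
  intros Ht. rewrite cross_term_eq, Cnorm_mul, Cnorm_cpow.
  pose proof (Cnorm_hurwitz_le w Hw (1 + t) ltac:(lra)).
  pose proof (zeta_majorant_le (Re w) Hw 1 (1 + t) ltac:(lra) ltac:(lra)).
  pose proof (Rpower_gt0 t (Re (Copp s))). cbn [Re Copp] in *. nra.
Qed.

Lemma cross_term_improper X : 0 < X ->
  exists I, is_improper_RInt_C (cross_term s w) X I /\ improper_abs_conv (cross_term s w) X /\
    forall pr, Ccoord pr -> is_lim (fun T => RInt (fun t => pr (cross_term s w t)) X T) p_infty (pr I).
Proof.
  intros HX.
  set (C := 2 * zeta_majorant (Re w) 1).
  assert (Hbound : forall g, (forall t, Rabs (g t) <= Cnorm (cross_term s w t)) ->
    forall t, X <= t -> Rabs (g t) <= C * Rpower t (- Re s)).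
  { intros g Hg t Ht. eapply Rle_trans; [apply Hg | apply Cnorm_cross_term_le; lra]. }
  assert (Hcoord : forall pr, Ccoord pr ->
    exists I : R, is_lim (fun T => RInt (fun t => pr (cross_term s w t)) X T) p_infty I).
  { intros pr Hpr. apply (is_lim_RInt_of_Rpower_bound _ X C (Re s)); try assumption.
    - apply Ccontinuous_pos_cross_term, Hpr.
    - apply Hbound. intros t. apply Ccoord_le_Cnorm, Hpr. }
  destruct (Hcoord Re (or_introl eq_refl)) as [Ire Hre], (Hcoord Im (or_intror eq_refl)) as [Iim Him].
  assert (Hlim : forall pr, Ccoord pr ->
    is_lim (fun T => RInt (fun t => pr (cross_term s w t)) X T) p_infty (pr (mkC Ire Iim)))
    by (intros pr [-> | ->]; assumption).
  exists (mkC Ire Iim). split; [| split; [| exact Hlim]].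
  - apply is_improper_RInt_C_of_is_lim. intros pr Hpr. split; [| apply Hlim, Hpr].
    intros T HT. apply ex_RInt_continuous_pos; [apply Ccontinuous_pos_cross_term, Hpr | lra | lra].
  - destruct (is_lim_RInt_of_Rpower_bound (fun t => Cnorm (cross_term s w t)) X C (Re s)) as [L HL]; try assumption.
    + apply continuous_pos_Cnorm, Ccontinuous_pos_cross_term.
    + apply Hbound. intros t. rewrite Rabs_pos_eq by apply Cnorm_ge0. apply Rle_refl.
    + exists L. apply is_improper_RInt_of_is_lim; [| exact HL].
      intros T HT. apply ex_RInt_continuous_pos; [apply continuous_pos_Cnorm, Ccontinuous_pos_cross_term | lra | lra].
Qed.

End CrossTerm.

(** * The telescoping identity *)

Lemma is_derive_Ccoord_cpow_mul pr w k t : Ccoord pr -> 0 < t ->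
  is_derive (fun y => pr (Cmul (cpow y w) k)) t (pr (Cmul (Cmul w (cpow t (Csub w Cone))) k)).
Proof.
  intros Hpr Ht.
  assert (Hexp : exp ((Re w - 1) * ln t) = exp (Re w * ln t) / t).
  { replace ((Re w - 1) * ln t) with (Re w * ln t + - ln t) by ring.
    rewrite exp_plus, exp_Ropp, exp_ln by exact Ht. reflexivity. }
  destruct Hpr as [-> | ->]; unfold Cmul, cpow, Csub, Cadd, Copp, Cone; cbn [Re Im];
    replace (Re w + Ropp 1) with (Re w - 1) by ring; replace (Im w + Ropp 0) with (Im w) by ring;
    rewrite Hexp; auto_derive; auto; field; lra.
Qed.

Section Telescoping.
Variables u v : Cplx.
Hypothesis Hu : 1 < Re u.
Hypothesis Hv : 1 < Re v.

Definition hurwitz_prod (t : R) : Cplx := Cmul (hurwitz u t) (hurwitz v t).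

Definition cpow_prod (t : R) : Cplx := Cmul (cpow t (Copp u)) (cpow t (Copp v)).

Definition cpow_prod_primitive (t : R) : Cplx :=
  Cdiv (cpow t (Csub (Csub Cone u) v)) (Csub (Cadd u v) Cone).

Lemma hurwitz_prod_telescope t : 0 < t ->
  hurwitz_prod t = Cadd (Cadd (Cadd (cpow_prod t) (cross_term u v t)) (cross_term v u t)) (hurwitz_prod (1 + t)).
Proof.
  intros Ht. unfold hurwitz_prod, cpow_prod. rewrite !cross_term_eq.
  rewrite (hurwitz_rec u Hu t Ht), (hurwitz_rec v Hv t Ht), (Rplus_comm t 1).
  apply Cplx_ext; unfold Cmul, Cadd; cbn [Re Im]; ring.
Qed.

Lemma Ccoord_cpow_prod_primitive_derive pr t : Ccoord pr -> 0 < t ->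
  is_derive (fun y => - pr (cpow_prod_primitive y)) t (pr (cpow_prod t)).
Proof.
  intros Hpr Ht.
  assert (Hnz : (Re u + Re v - 1) ^ 2 + (Im u + Im v) ^ 2 <> 0).
  { pose proof (pow_lt (Re u + Re v - 1) 2 ltac:(lra)); pose proof (pow2_ge_0 (Im u + Im v)). lra. }
  assert (Hcoef : Cmul (Csub (Csub Cone u) v) (Cinv (Csub (Cadd u v) Cone)) = Copp Cone).
  { apply Cplx_ext; unfold Cmul, Cinv, Csub, Cadd, Copp, Cone; cbn [Re Im]; field;
      replace (Re u + Re v + Ropp 1) with (Re u + Re v - 1) by ring;
      replace (Im u + Im v + Ropp 0) with (Im u + Im v) by ring;
      exact Hnz. }
  assert (Hexp : Csub (Csub (Csub Cone u) v) Cone = Cadd (Copp u) (Copp v))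
    by (apply Cplx_ext; unfold Csub, Cadd, Copp, Cone; cbn [Re Im]; ring).
  unfold cpow_prod. rewrite <- cpow_add, <- Hexp.
  replace (pr (cpow t (Csub (Csub (Csub Cone u) v) Cone)))
    with (- pr (Cmul (Cmul (Csub (Csub Cone u) v) (cpow t (Csub (Csub (Csub Cone u) v) Cone)))
                     (Cinv (Csub (Cadd u v) Cone)))).
  - apply (is_derive_opp (fun y => pr (cpow_prod_primitive y))), is_derive_Ccoord_cpow_mul; assumption.
  - set (z := cpow t _). set (a := Csub (Csub Cone u) v). set (b := Cinv _).
    replace (Cmul (Cmul a z) b) with (Cmul (Cmul a b) z)
      by (apply Cplx_ext; unfold Cmul; cbn [Re Im]; ring).
    unfold a, b. rewrite Hcoef.
    destruct Hpr as [-> | ->]; unfold Cmul, Copp, Cone; cbn [Re Im]; ring.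
Qed.

Lemma Ccontinuous_pos_cpow_prod : Ccontinuous_pos cpow_prod.
Proof. apply Ccontinuous_pos_mul; apply Ccontinuous_pos_cpow. Qed.

Lemma RInt_cpow_prod pr a b : Ccoord pr -> 0 < a -> 0 < b ->
  RInt (fun t => pr (cpow_prod t)) a b = pr (cpow_prod_primitive a) - pr (cpow_prod_primitive b).
Proof.
  intros Hpr Ha Hb. apply is_RInt_unique.
  assert (Hab : 0 < Rmin a b) by (apply Rmin_glb_lt; assumption).
  replace (pr (cpow_prod_primitive a) - pr (cpow_prod_primitive b))
    with (minus (- pr (cpow_prod_primitive b)) (- pr (cpow_prod_primitive a)))
    by (unfold minus, plus, opp; simpl; ring).
  apply (is_RInt_derive (fun y => - pr (cpow_prod_primitive y))).
  - intros t Ht. apply Ccoord_cpow_prod_primitive_derive; [exact Hpr | lra].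
  - intros t Ht. apply continuity_pt_filterlim, Ccontinuous_pos_cpow_prod; [exact Hpr | lra].
Qed.

Lemma is_lim_cpow_prod_primitive pr : Ccoord pr -> is_lim (fun T => pr (cpow_prod_primitive T)) p_infty 0.
Proof.
  intros Hpr. set (k := Cnorm (Cinv (Csub (Cadd u v) Cone))).
  apply (is_lim_le_le_loc (fun T => - (k * Rpower T (1 - Re u - Re v))) (fun T => k * Rpower T (1 - Re u - Re v))).
  - exists 0. intros T _. apply Rabs_le_between.
    eapply Rle_trans; [apply Ccoord_le_Cnorm, Hpr |].
    unfold cpow_prod_primitive, Cdiv. rewrite Cnorm_mul, Cnorm_cpow, Rmult_comm.
    right. reflexivity.
  - replace (Finite 0) with (Finite (- (k * 0))) by (f_equal; ring).
    apply (is_lim_opp _ p_infty (k * 0)), (is_lim_scal_l _ k p_infty 0), is_lim_Rpower_neg. lra.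
  - rewrite <- (Rmult_0_r k). apply (is_lim_scal_l _ k p_infty 0), is_lim_Rpower_neg. lra.
Qed.

Lemma Ccontinuous_pos_hurwitz_prod : Ccontinuous_pos hurwitz_prod.
Proof. apply Ccontinuous_pos_mul; apply Ccontinuous_pos_hurwitz; assumption. Qed.

Lemma RInt_hurwitz_prod_telescope pr X T : Ccoord pr -> 0 < X -> 0 < T ->
  RInt (fun t => pr (hurwitz_prod t)) X (1 + X) =
    pr (cpow_prod_primitive X) - pr (cpow_prod_primitive T)
    + RInt (fun t => pr (cross_term u v t)) X T + RInt (fun t => pr (cross_term v u t)) X T
    + RInt (fun t => pr (hurwitz_prod t)) T (1 + T).
Proof.
  intros Hpr HX HT.
  assert (Hex : forall F, Ccontinuous_pos F -> ex_RInt (fun t => pr (F t)) X T)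
    by (intros F HF; apply ex_RInt_continuous_pos; [apply HF, Hpr | exact HX | exact HT]).
  assert (Hsum : RInt (fun t => pr (hurwitz_prod t) - pr (hurwitz_prod (1 + t))) X T =
    RInt (fun t => plus (plus (pr (cpow_prod t)) (pr (cross_term u v t))) (pr (cross_term v u t))) X T).
  { apply RInt_ext. intros t Ht.
    assert (0 < t) by (pose proof (Rmin_glb_lt X T 0 HX HT); lra).
    rewrite (hurwitz_prod_telescope t), !Ccoord_Cadd by assumption. unfold plus; simpl. ring. }
  rewrite RInt_sub_shift1 in Hsum by (apply Ccontinuous_pos_hurwitz_prod, Hpr || assumption).
  rewrite (RInt_plus (V := R_CompleteNormedModule) (fun t => plus (pr (cpow_prod t)) (pr (cross_term u v t)))
    (fun t => pr (cross_term v u t))) in Hsum.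
  2: { apply (ex_RInt_plus (V := R_NormedModule)); apply Hex;
         [apply Ccontinuous_pos_cpow_prod | apply Ccontinuous_pos_cross_term; assumption]. }
  2: { apply Hex, Ccontinuous_pos_cross_term; assumption. }
  rewrite (RInt_plus (V := R_CompleteNormedModule) (fun t => pr (cpow_prod t)) (fun t => pr (cross_term u v t)))
    in Hsum by (apply Hex; first [apply Ccontinuous_pos_cpow_prod | apply Ccontinuous_pos_cross_term; assumption]).
  rewrite RInt_cpow_prod in Hsum by assumption.
  unfold plus in Hsum; simpl in Hsum. lra.
Qed.

Lemma is_lim_RInt_hurwitz_prod_unit pr : Ccoord pr ->
  is_lim (fun T => RInt (fun t => pr (hurwitz_prod t)) T (1 + T)) p_infty 0.
Proof.
  intros Hpr.
  apply (is_lim_ext (fun T => RInt (fun t => pr (hurwitz_prod t)) T (T + 1))).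
  { intros T. rewrite Rplus_comm. reflexivity. }
  apply (is_lim_RInt_unit_interval _ (fun T => 4 * zeta_majorant (Re u) T * zeta_majorant (Re v) 1)).
  - apply Ccontinuous_pos_hurwitz_prod, Hpr.
  - intros T t HT Ht. eapply Rle_trans; [apply Ccoord_le_Cnorm, Hpr |].
    unfold hurwitz_prod. rewrite Cnorm_mul.
    pose proof (Cnorm_hurwitz_le u Hu t ltac:(lra)); pose proof (Cnorm_hurwitz_le v Hv t ltac:(lra)).
    pose proof (zeta_majorant_le (Re u) Hu T t ltac:(lra) ltac:(lra)).
    pose proof (zeta_majorant_le (Re v) Hv 1 t ltac:(lra) ltac:(lra)).
    pose proof (Cnorm_ge0 (hurwitz u t)); pose proof (Cnorm_ge0 (hurwitz v t)).
    pose proof (zeta_majorant_gt0 (Re u) Hu t); pose proof (zeta_majorant_gt0 (Re v) Hv t).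
    apply Rle_trans with (2 * zeta_majorant (Re u) t * (2 * zeta_majorant (Re v) t));
      [apply Rmult_le_compat; lra | nra].
  - replace (Finite 0) with (Finite (4 * 0 * zeta_majorant (Re v) 1)) by (f_equal; ring).
    apply (is_lim_scal_r _ _ p_infty (4 * 0)), (is_lim_scal_l _ 4 p_infty 0), is_lim_zeta_majorant, Hu.
Qed.

(* The telescoping identity holds for every T, and all T-dependent terms but the two
   cross integrals tend to 0 as T -> +oo. *)
Lemma RInt_hurwitz_prod X I1 I2 : 0 < X ->
  (forall pr, Ccoord pr -> is_lim (fun T => RInt (fun t => pr (cross_term u v t)) X T) p_infty (pr I1)) ->
  (forall pr, Ccoord pr -> is_lim (fun T => RInt (fun t => pr (cross_term v u t)) X T) p_infty (pr I2)) ->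
  RInt_Cplx hurwitz_prod X (1 + X) = Cadd (Cadd (cpow_prod_primitive X) I1) I2.
Proof.
  intros HX H1 H2. apply Ccoord_ext. intros pr Hpr.
  rewrite Ccoord_RInt_Cplx, !Ccoord_Cadd by exact Hpr.
  assert (Hlim : is_lim (fun T => pr (cpow_prod_primitive X) - pr (cpow_prod_primitive T)
      + RInt (fun t => pr (cross_term u v t)) X T + RInt (fun t => pr (cross_term v u t)) X T
      + RInt (fun t => pr (hurwitz_prod t)) T (1 + T)) p_infty
      (pr (cpow_prod_primitive X) - 0 + pr I1 + pr I2 + 0)).
  { apply is_lim_plus'; [| apply is_lim_RInt_hurwitz_prod_unit, Hpr].
    apply is_lim_plus'; [| apply H2, Hpr].
    apply is_lim_plus'; [| apply H1, Hpr].
    apply is_lim_minus'; [apply is_lim_const | apply is_lim_cpow_prod_primitive, Hpr]. }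
  replace (pr (cpow_prod_primitive X) + pr I1 + pr I2)
    with (pr (cpow_prod_primitive X) - 0 + pr I1 + pr I2 + 0) by ring.
  apply Rbar_finite_eq. rewrite <- (is_lim_unique _ _ _ Hlim).
  symmetry. apply is_lim_unique, (is_lim_ext_loc (fun _ => RInt (fun t => pr (hurwitz_prod t)) X (1 + X))).
  - exists X. intros T HT. apply RInt_hurwitz_prod_telescope; [exact Hpr | exact HX | lra].
  - apply is_lim_const.
Qed.

End Telescoping.

Lemma is_RInt_C_shift F X : Ccontinuous_pos F -> 0 < X ->
  is_RInt_C (fun a => F (X + a)) 0 1 (RInt_Cplx F X (1 + X)).
Proof.
  intros HF HX.
  assert (Hcoord : forall pr, Ccoord pr ->
    Defs.is_RInt (fun a => pr (F (X + a))) 0 1 (pr (RInt_Cplx F X (1 + X)))).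
  { intros pr Hpr. rewrite Ccoord_RInt_Cplx by exact Hpr.
    replace (RInt (fun t => pr (F t)) X (1 + X)) with (RInt (fun a => pr (F (X + a))) 0 1).
    - apply Defs_is_RInt_RInt, (ex_RInt_continuous (V := R_CompleteNormedModule)). intros a Ha.
      rewrite Rmin_left in Ha by lra.
      apply continuity_pt_filterlim, (continuity_pt_shift (fun t => pr (F t))), HF; [exact Hpr | lra].
    - rewrite (RInt_shift (fun t => pr (F t)) X 0 1), Rplus_0_r, (Rplus_comm X 1); [reflexivity |].
      apply ex_RInt_continuous_pos; [apply HF, Hpr | lra | lra]. }
  split; apply Hcoord; [left | right]; reflexivity.
Qed.

Lemma zeta_tail_mul_eq_hurwitz_prod x u v a :
  Cmul (zeta_tail x u a) (zeta_tail x v a) = hurwitz_prod u v (INR x + a).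
Proof. rewrite !zeta_tail_eq_hurwitz. reflexivity. Qed.

Theorem mainTheorem7 (x : nat) (u v : Cplx) :
  (1 <= x)%nat -> 1 < Re u -> 1 < Re v ->
  exists I1 I2 : Cplx,
    (exists Jv, is_RInt_C (fun alpha => Cmul (zeta_tail x u alpha) (zeta_tail x v alpha)) 0 1 Jv) /\
    is_improper_RInt_C (fun alpha => Cmul (cpow alpha (Copp u)) (zeta_tail 1 v alpha)) (INR x) I1 /\
    improper_abs_conv (fun alpha => Cmul (cpow alpha (Copp u)) (zeta_tail 1 v alpha)) (INR x) /\
    is_improper_RInt_C (fun alpha => Cmul (cpow alpha (Copp v)) (zeta_tail 1 u alpha)) (INR x) I2 /\
    improper_abs_conv (fun alpha => Cmul (cpow alpha (Copp v)) (zeta_tail 1 u alpha)) (INR x) /\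
    J x u v =
      Cadd (Cadd (Cdiv (cpow (INR x) (Csub (Csub Cone u) v)) (Csub (Cadd u v) Cone)) I1) I2.
Proof.
  intros Hx Hu Hv.
  assert (HX : 0 < INR x) by (apply lt_0_INR; lia).
  destruct (cross_term_improper u v Hu Hv (INR x) HX) as [I1 [Himp1 [Habs1 Hlim1]]].
  destruct (cross_term_improper v u Hv Hu (INR x) HX) as [I2 [Himp2 [Habs2 Hlim2]]].
  assert (HJ : is_RInt_C (fun a => Cmul (zeta_tail x u a) (zeta_tail x v a)) 0 1
                 (RInt_Cplx (hurwitz_prod u v) (INR x) (1 + INR x))).
  { rewrite (functional_extensionality _ _ (zeta_tail_mul_eq_hurwitz_prod x u v)).
    apply is_RInt_C_shift; [apply Ccontinuous_pos_hurwitz_prod | ]; assumption. }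
  exists I1, I2. do 5 (split; [eauto |]).
  unfold J. rewrite (RInt_C_eq _ _ _ _ HJ). apply RInt_hurwitz_prod; assumption.
Qed.
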